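(* Let $G=(V,E)$ be a finite graph (parallel edges and loops allowed) and let $e\neq f$ be two edges of $G$. Then, as polynomials in the variables $\{x_g : g\in E\setminus\{e,f\}\}$, \[ \mathcal{M}_{ef}(1) \;=\; \sum_{\beta,\gamma}\Big(\mathbf{x}^{\beta}\mathbf{x}^{\gamma}\sum_{\mathbf{m}\in B_{\beta,\gamma}} \mathbf{m}\Big), \] where the outer sum runs over all ordered pairs $(\beta,\gamma)$ of disjoint subsets of $E\setminus\{e,f\}$.
   Context: Let $\{x_g : g\in E\}$ be variables (positive reals). For $F\subseteq E$ write $\mathbf{x}^F=\prod_{g\in F}x_g$ and let $k(F)$ be the number of connected components of the spanning subgraph $(V,F)$. For $A,B\subseteq E$ set $\mathcal{T}_A^B=\sum_{F\subseteq E:\,A\subseteq F,\,F\cap B=\varnothing}\mathbf{x}^F q^{k(F)}$. Write $\mathcal{T}_e^f=\mathcal{T}_{\{e\}}^{\{f\}}$, $\mathcal{T}_f^e=\mathcal{T}_{\{f\}}^{\{e\}}$, $\mathcal{T}_{ef}=\mathcal{T}_{\{e,f\}}^{\varnothing}$, $\mathcal{T}^{ef}=\mathcal{T}_{\varnothing}^{\{e,f\}}$. The difference $\mathcal{T}_e^f\mathcal{T}_f^e-\mathcal{T}_{ef}\mathcal{T}^{ef}$ is divisible by $x_ex_f(1-q)$, and $\mathcal{M}_{ef}(q):=(\mathcal{T}_e^f\mathcal{T}_f^e-\mathcal{T}_{ef}\mathcal{T}^{ef})/(x_ex_f(1-q))$; $\mathcal{M}_{ef}(1)$ is this polynomial evaluated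 at $q=1$. Let $E^{ef}=E\setminus\{e,f\}$. A subset $F\subseteq E^{ef}$ is a paracel if $e$ and $f$ both join the same two distinct connected components of $(V,F)$; equivalently $(V,F+e)$ and $(V,F+f)$ have the same connected components (as vertex sets) and $k(F+e)=k(F+f)=k(F)-1$. For a paracel $F$, an edge of $E^{ef}\setminus F$ is a smoot for $F$ if it also joins those same two components of $(V,F)$. Given disjoint $\beta,\gamma\subseteq E^{ef}$, a subset $\alpha\subseteq E^{ef}$ is compatible with $\beta,\gamma$ if $\alpha$ is disjoint from $\beta$ and $\gamma$, $\gamma\cup\alpha$ is a paracel, and every edge of $\beta$ is a smoot for $\gamma\cup\alpha$. Let $A_{\beta,\gamma}$ be the set of such $\alpha$. Two elements $\alpha,\alpha'\in A_{\beta,\gamma}$ (possibly equal) are twins if $\alpha\cap\alpha'\in A_{\beta,\gamma}$. $B_{\beta,\gamma}$ is the set (each monomial counted once) of monomials of the form $\mathbf{x}^{\alpha}\mathbf{x}^{\alpha'}$ with $\alpha,\alpha'$ twins in $A_{\beta,\gamma}$. *)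

From HB Require Import structures.
From mathcomp Require Import all_boot all_order all_algebra.
From mathcomp Require Import mpoly.
Set Implicit Arguments. Unset Strict Implicit. Unset Printing Implicit Defensive.
Import GRing.Theory.
Local Open Scope ring_scope.

(* A finite multigraph (loops and parallel edges allowed): vertex set V (a
   finType), edge set 'I_m, and ends : 'I_m -> V * V giving the two
   endpoints of each edge (equal endpoints = loop). *)
Section Graph.
Variables (V : finType) (m : nat) (ends : 'I_m -> V * V).

Definition adjF (F : {set 'I_m}) : rel V :=
  fun u v => [exists g in F, (ends g == (u, v)) || (ends g == (v, u))].

Definition compF (F : {set 'I_m}) (u : V) : {set V} :=
  [set v | connect (adjF F) u v].

Definition kcomp (F : {set 'I_m}) : nat :=
  #|[set compF F u | u : V]|.

Definition joined (F : {set 'I_m}) (g : 'I_m) : {set {set V}} :=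
  [set compF F (ends g).1; compF F (ends g).2].

Definition Eef (e f : 'I_m) : {set 'I_m} := [set: 'I_m] :\ e :\ f.

Definition paracel (e f : 'I_m) (F : {set 'I_m}) : bool :=
  [&& F \subset Eef e f,
      compF F (ends e).1 != compF F (ends e).2 &
      joined F e == joined F f].

Definition smoot (e f : 'I_m) (F : {set 'I_m}) (g : 'I_m) : bool :=
  (g \in Eef e f :\: F) && (joined F g == joined F e).

Definition compatible (e f : 'I_m) (beta gamma alpha : {set 'I_m}) : bool :=
  [&& alpha \subset Eef e f,
      [disjoint alpha & beta], [disjoint alpha & gamma],
      paracel e f (gamma :|: alpha) &
      [forall g in beta, smoot e f (gamma :|: alpha) g]].

Definition Aset (e f : 'I_m) (beta gamma : {set 'I_m}) : {set {set 'I_m}} :=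
  [set alpha | compatible e f beta gamma alpha].

Definition twins (e f : 'I_m) (beta gamma a a' : {set 'I_m}) : bool :=
  [&& a \in Aset e f beta gamma, a' \in Aset e f beta gamma &
      (a :&: a') \in Aset e f beta gamma].

Definition xmon (F : {set 'I_m}) : {mpoly int[m]} := \prod_(g in F) 'X_g.

Definition Bset (e f : 'I_m) (beta gamma : {set 'I_m}) : seq {mpoly int[m]} :=
  undup [seq xmon p.1 * xmon p.2 |
          p <- enum [pred p : {set 'I_m} * {set 'I_m} |
                      twins e f beta gamma p.1 p.2]].

(* T_A^B as a polynomial in q (the variable 'X of {poly _}) with
   coefficients in Z[x_g : g in E] *)
Definition Tpoly (A B : {set 'I_m}) : {poly {mpoly int[m]}} :=
  \sum_(F : {set 'I_m} | (A \subset F) && [disjoint F & B])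
     (xmon F)%:P * 'X ^+ kcomp F.

Definition Ddiff (e f : 'I_m) : {poly {mpoly int[m]}} :=
  Tpoly [set e] [set f] * Tpoly [set f] [set e]
  - Tpoly [set e; f] set0 * Tpoly set0 [set e; f].

Definition rhs35 (e f : 'I_m) : {mpoly int[m]} :=
  \sum_(p : {set 'I_m} * {set 'I_m} |
          [&& p.1 \subset Eef e f, p.2 \subset Eef e f & [disjoint p.1 & p.2]])
     (xmon p.1 * xmon p.2 * \sum_(mo <- Bset e f p.1 p.2) mo).

End Graph.

From HB Require Import structures.
From mathcomp Require Import all_boot all_order all_algebra.
From mathcomp Require Import mpoly.
From mathcomp Require Import ring.
Set Implicit Arguments. Unset Strict Implicit. Unset Printing Implicit Defensive.
Import GRing.Theory.

(* Splitting F according to its intersection with {e, f}, the difference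
   T_e^f T_f^e - T_ef T^ef is the sum over A, B included in E^ef of
   x_e x_f x^A x^B (q^k(A+e) q^k(B+f) - q^k(A+e+f) q^k(B)), visibly divisible by
   1 - q.  At q = 1 the quotient is the difference of exponents; adding an edge
   lowers k by one exactly when it joins two distinct components, so this is
   [f bridges B] - [f bridges A+e].  Exchanging A and B in the first term gives
   [f bridges A] - [f bridges A+e], the indicator of "A is a paracel".
   On the other side, twins a, a' correspond to pairs (I, J) with I = a :&: a'
   compatible and J, the symmetric difference, made of non-smoots; the monomial
   is x^I x^I x^J.  Conversely J splits into its edges touching the component of
   one end of e and the others.  Finally (beta, gamma, I, J) |-> (gamma :|: I,
   beta :|: I :|: J) is a bijection onto the pairs (A, B) with A a paracel, so
   both sides equal the sum of x^A x^B over paracels A and all B. *)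

Lemma eq_set2 (T : finType) (a b c d : T) :
  ([set a; b] == [set c; d]) = (a == c) && (b == d) || (a == d) && (b == c).
Proof.
apply/eqP/idP => [E|/orP[]/andP[/eqP-> /eqP->] //]; last exact: setUC.
have Ha : a \in [set c; d] by rewrite -E set21.
have Hb : b \in [set c; d] by rewrite -E set22.
have Hc : c \in [set a; b] by rewrite E set21.
have Hd : d \in [set a; b] by rewrite E set22.
move: Ha Hb Hc Hd; rewrite !inE.
by do 4 case/orP=> /eqP ?; subst; rewrite !eqxx ?orbT.
Qed.

Lemma distinct_pair_eq (T : eqType) (a b c d : T) :
  (a != b) && ((a == c) && (b == d) || (a == d) && (b == c)) =
  [&& c != d, (a == c) || (b == c) & (a == d) || (b == d)].
Proof. by do ![case: eqP => // ?; subst]. Qed.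

Lemma touch_one_avoid_other (T : eqType) (a b c d : T) :
  a != b -> ~~ ((c == a) && (d == b) || (c == b) && (d == a)) -> (a == c) || (a == d) ->
  (b != c) && (b != d).
Proof. by do ![case: eqP => // ?; subst]. Qed.

Lemma card_imset_merge (T T' : finType) (f : T -> T') (S : {set T}) k l :
  k \in S -> l \in S -> k != l -> f k = f l -> {in S :\ l &, injective f} ->
  #|S| = #|f @: S|.+1.
Proof.
move=> kS lS kl fkl finj.
have -> : f @: S = f @: (S :\ l).
  apply/setP => y; apply/imsetP/imsetP => [[x xS ->]|[x /setD1P[_ xS] ->]]; last by exists x.
  have [->|xl] := eqVneq x l; first by exists k; rewrite // !inE kl.
  by exists x; rewrite // !inE xl.
by rewrite card_in_imset // (cardsD1 l S) lS.
Qed.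

Lemma disjointsU (T : finType) (A B C : {set T}) :
  [disjoint A :|: B & C] = [disjoint A & C] && [disjoint B & C].
Proof. by rewrite -disjointU; apply: eq_disjoint => x; rewrite !inE. Qed.

Lemma setUI_split (T : finType) (I J K : {set T}) : (I :|: K) :&: (I :|: (J :\: K)) = I.
Proof. by rewrite -setUIr setIDA setIC -setIDA setDv setI0 setU0. Qed.

Lemma setU_split_symdiff (T : finType) (I J K : {set T}) :
  K \subset J -> [disjoint J & I] ->
  ((I :|: K) :\: (I :|: (J :\: K))) :|: ((I :|: (J :\: K)) :\: (I :|: K)) = J.
Proof.
move=> sKJ dJI; apply/setP => x; rewrite !inE.
have: (x \in K) ==> (x \in J) by apply/implyP/subsetP.
have: (x \in J) ==> (x \notin I) by apply/implyP => /(disjointFr dJI)->.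
by case: (x \in I); case: (x \in J); case: (x \in K).
Qed.

Section Connectivity.
Variables (V : finType) (m : nat) (ends : 'I_m -> V * V).
Implicit Types (F J : {set 'I_m}) (g h : 'I_m).
Local Notation cn F := (connect (adjF ends F)).
Local Notation comp F := (compF ends F).

Lemma adjF_sym F : ssrbool.symmetric (adjF ends F).
Proof. by move=> u v; apply: eq_existsb => g; rewrite orbC. Qed.

Lemma connectF_sym F : connect_sym (adjF ends F).
Proof. exact/sym_connect_sym/adjF_sym. Qed.

Lemma compF_eq F u v : (comp F u == comp F v) = cn F u v.
Proof.
apply/eqP/idP => [E|uv]; last by apply/setP => w; rewrite !inE (same_connect (connectF_sym F) uv).
have : v \in comp F v by rewrite inE connect0.
by rewrite -E inE.
Qed.

Lemma connectF_edge F h : h \in F -> cn F (ends h).1 (ends h).2.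
Proof.
move=> hF; apply/connect1/existsP; exists h; rewrite hF /=.
by case: (ends h) => a b; rewrite eqxx.
Qed.

Lemma connectF_sub F F' u v : F \subset F' -> cn F u v -> cn F' u v.
Proof.
move=> sFF'; apply: connect_sub => x y /existsP[h /andP[hF xy]].
by apply/connect1/existsP; exists h; rewrite (subsetP sFF').
Qed.

Lemma connectF_closed F (W : pred V) u v :
  {in F, forall h, W (ends h).1 = W (ends h).2} -> cn F u v -> W u = W v.
Proof.
move=> WF; apply: (closed_connect (a := W)) => x y /existsP[h /andP[hF]].
by case/orP=> /eqP E; have := WF h hF; rewrite E.
Qed.

Lemma connectF_setU_avoid F J u v :
  {in J, forall h, ~~ cn F u (ends h).1 && ~~ cn F u (ends h).2} ->
  ~~ cn F u v -> ~~ cn (F :|: J) u v.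
Proof.
move=> avoidJ nuv; apply: contra nuv => /(connectF_closed (W := cn F u)) <-.
  exact: connect0.
move=> h /setUP[hF|hJ]; last by case/andP: (avoidJ h hJ) => /negbTE-> /negbTE->.
exact/same_connect_r/connectF_edge/hF/connectF_sym.
Qed.

Definition same_join F g h :=
  cn F (ends g).1 (ends h).1 && cn F (ends g).2 (ends h).2 ||
  cn F (ends g).1 (ends h).2 && cn F (ends g).2 (ends h).1.

Lemma joined_eqE F g h : (joined ends F g == joined ends F h) = same_join F g h.
Proof. by rewrite /joined eq_set2 !compF_eq. Qed.

Lemma same_join_sub F F' g h : F \subset F' -> same_join F g h -> same_join F' g h.
Proof.
move=> sFF' /orP[]/andP[c1 c2];
by rewrite /same_join (connectF_sub sFF' c1) (connectF_sub sFF' c2) ?orbT.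
Qed.

Lemma same_join_connect F g h :
  g \in F -> same_join F g h -> cn F (ends h).1 (ends h).2.
Proof.
move=> gF; rewrite /same_join -!compF_eq.
have := connectF_edge gF; rewrite -compF_eq => g12.
by case/orP=> /andP[/eqP<- /eqP<-] //; rewrite eq_sym.
Qed.

Definition near F g x := cn F (ends g).1 x || cn F (ends g).2 x.

Lemma near_edge F g h : h \in F -> near F g (ends h).1 = near F g (ends h).2.
Proof.
by move=> hF; rewrite /near !(same_connect_r (connectF_sym F) (connectF_edge hF)).
Qed.

Lemma connect_setU1 F g u v :
  cn (g |: F) u v = cn F u v || near F g u && near F g v.
Proof.
have sF : F \subset g |: F := subsetUr _ _.
apply/idP/idP => [uv|/orP[/(connectF_sub sF)//|/andP[nu nv]]].
  have [nu|/norP[]] := boolP (near F g u).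
    suff nearE : {in g |: F, forall h, near F g (ends h).1 = near F g (ends h).2}.
      by rewrite -(connectF_closed nearE uv) nu orbT.
    by move=> h /setU1P[->|/near_edge//]; rewrite /near !connect0 orbT.
  rewrite !(connectF_sym F _ u) => /negbTE n1 /negbTE n2.
  suff uE : {in g |: F, forall h, cn F u (ends h).1 = cn F u (ends h).2}.
    by rewrite -(connectF_closed uE uv) connect0.
  move=> h /setU1P[->|hF]; first by rewrite n1 n2.
  exact/same_connect_r/connectF_edge/hF/connectF_sym.
have g12 : cn (g |: F) (ends g).1 (ends g).2 by apply/connectF_edge/setU11.
have near_g1 x : near F g x -> cn (g |: F) (ends g).1 x.
  by case/orP=> /(connectF_sub sF) c //; apply: connect_trans g12 c.
apply: connect_trans (near_g1 v nv); by rewrite connectF_sym near_g1.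
Qed.

Lemma near_compF F g u :
  near F g u = (comp F u == comp F (ends g).1) || (comp F u == comp F (ends g).2).
Proof. by rewrite /near !compF_eq !(connectF_sym F u). Qed.

Lemma compF_setU1 F g u : comp (g |: F) u =
  if near F g u then comp F (ends g).1 :|: comp F (ends g).2 else comp F u.
Proof.
apply/setP => v; rewrite inE connect_setU1.
case: ifP => nu; last by rewrite andFb orbF inE.
rewrite andTb !inE -/(near F g v); apply/orP/idP => [[uv|//]|]; last by right.
by rewrite -(connectF_closed (W := near F g) (fun h => near_edge g (h := h)) uv).
Qed.

Definition bridging F g := comp F (ends g).1 != comp F (ends g).2.

Lemma kcomp_setU1 F g : kcomp ends F = kcomp ends (g |: F) + bridging F g.
Proof.
rewrite /kcomp /bridging; set K := comp F (ends g).1; set L := comp F (ends g).2.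
pose merge X := if (X == K) || (X == L) then K :|: L else X.
have mergeE u : merge (comp F u) = comp (g |: F) u by rewrite compF_setU1 near_compF.
have -> : [set comp (g |: F) u | u : V] = merge @: [set comp F u | u : V].
  by rewrite -imset_comp; apply: eq_imset => u; rewrite /= mergeE.
have [KL|nKL] := eqVneq K L.
  rewrite addn0 (eq_imset _ (g := id)) ?imset_id // => X.
  by rewrite /merge -KL orbb setUid; case: eqP.
rewrite addn1; apply: card_imset_merge nKL _ _ => [|||X Y].
- exact: imset_f.
- exact: imset_f.
- by rewrite /merge !eqxx orbT.
move=> /setD1P[XL /imsetP[x _ Xx]] /setD1P[YL /imsetP[y _ Yy]]; subst X Y.
rewrite !mergeE => /eqP; rewrite compF_eq connect_setU1 !near_compF -/K -/L.
rewrite (negbTE XL) (negbTE YL) !orbF -compF_eq.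
by case/orP=> [/eqP//|/andP[/eqP-> /eqP->]].
Qed.

Definition touching F u J := [set j in J | cn F u (ends j).1 || cn F u (ends j).2].

Section EdgePair.
Variables e f : 'I_m.
Implicit Types (A I be ga : {set 'I_m}).

Lemma paracelE A : paracel ends e f A =
  [&& A \subset Eef e f, ~~ cn A (ends e).1 (ends e).2 & same_join A e f].
Proof. by rewrite /paracel compF_eq joined_eqE. Qed.

Lemma paracel_sub A : paracel ends e f A -> A \subset Eef e f.
Proof. by case/and3P. Qed.

Lemma smootE A g : smoot ends e f A g = (g \in Eef e f :\: A) && same_join A g e.
Proof. by rewrite /smoot joined_eqE. Qed.

Lemma paracel_bridging A : A \subset Eef e f ->
  paracel ends e f A = bridging A f && ~~ bridging (e |: A) f.
Proof.
move=> sA; rewrite paracelE sA /bridging !compF_eq connect_setU1 /near /same_join negbK.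
rewrite -!compF_eq /= distinct_pair_eq.
by case: eqP => //=; rewrite !(eq_sym (comp A (ends f).1)) !(eq_sym (comp A (ends f).2)).
Qed.

Lemma bridging_setU1 A g : bridging (e |: A) g -> bridging A g.
Proof. by rewrite /bridging !compF_eq; apply/contra/connectF_sub/subsetUr. Qed.

Lemma paracel_no_smoot A A' g :
  paracel ends e f A' -> A \subset A' -> g \in A' -> ~~ smoot ends e f A g.
Proof.
rewrite paracelE smootE => /and3P[_ nc _] sA gA'; apply: contra nc => /andP[_].
by move/(same_join_sub sA); apply: same_join_connect.
Qed.

Lemma touching_avoid F h :
  ~~ cn F (ends e).1 (ends e).2 -> ~~ same_join F h e ->
  cn F (ends e).1 (ends h).1 || cn F (ends e).1 (ends h).2 ->
  ~~ cn F (ends e).2 (ends h).1 && ~~ cn F (ends e).2 (ends h).2.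
Proof. by rewrite /same_join -!compF_eq; apply: touch_one_avoid_other. Qed.

Lemma compatible_setU be ga I J :
  compatible ends e f be ga I -> J \subset Eef e f ->
  [disjoint J & be] -> [disjoint J & ga] -> ~~ cn (ga :|: I :|: J) (ends e).1 (ends e).2 ->
  compatible ends e f be ga (I :|: J).
Proof.
case/and5P=> sI dIb dIg + smI sJ dJb dJg nc; rewrite paracelE => /and3P[sgI _ jI].
have sF : ga :|: I \subset ga :|: (I :|: J) by rewrite setUA subsetUl.
apply/and5P; split; rewrite ?disjointsU ?dIb ?dIg //.
- by rewrite subUset sI sJ.
- by rewrite paracelE (same_join_sub sF jI) setUA subUset sgI sJ nc.
apply/forallP => g; apply/implyP => gb; move/forallP/(_ g)/implyP/(_ gb): smI.
rewrite !smootE => /andP[gE /(same_join_sub sF)->]; rewrite andbT.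
by case/setDP: gE => gE gF; rewrite setUA in_setD in_setU (disjointFl dJb gb) orbF gF gE.
Qed.

(* Twins a, a' are recorded as I = a :&: a' and J = their symmetric difference. *)
Definition twin_split be ga (q : {set 'I_m} * {set 'I_m}) : bool :=
  [&& q.1 \in Aset ends e f be ga, q.2 \subset Eef e f :\: (q.1 :|: be :|: ga) &
      [forall g in q.2, ~~ smoot ends e f (ga :|: q.1) g]].

Lemma twins_split be ga a a' : twins ends e f be ga a a' ->
  twin_split be ga (a :&: a', (a :\: a') :|: (a' :\: a)).
Proof.
case/and3P; rewrite !inE => /and5P[sa dab dag para _] /and5P[sa' dab' dag' para' _] cI.
rewrite /twin_split /= inE cI /=; apply/andP; split.
  apply/subsetP => x /setUP[]/setDP[xa xna];
  rewrite in_setD !in_setU in_setI (negbTE xna) ?andbF ?andFb.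
    by rewrite (disjointFr dab xa) (disjointFr dag xa) (subsetP sa).
  by rewrite (disjointFr dab' xa) (disjointFr dag' xa) (subsetP sa').
apply/forallP => g; apply/implyP => /setUP[]/setDP[gx _].
  by apply: paracel_no_smoot para (setUS _ (subsetIl _ _)) _; rewrite inE gx orbT.
by apply: paracel_no_smoot para' (setUS _ (subsetIr _ _)) _; rewrite inE gx orbT.
Qed.

Lemma split_twins be ga I J : twin_split be ga (I, J) ->
  twins ends e f be ga (I :|: touching (ga :|: I) (ends e).1 J)
                       (I :|: (J :\: touching (ga :|: I) (ends e).1 J)).
Proof.
case/and3P=> /= cI; rewrite subsetD disjoint_sym !disjointsU.
case/andP=> sJ /andP[/andP[dIJ dbJ] dgJ] nsm.
set F := ga :|: I; set J1 := touching F (ends e).1 J.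
have sJ1 : J1 \subset J by apply/subsetP => x; rewrite inE => /andP[].
have cI' : compatible ends e f be ga I by rewrite inE in cI.
have ncF : ~~ cn F (ends e).1 (ends e).2.
  by case/and5P: cI' => _ _ _; rewrite paracelE => /and3P[].
rewrite /twins setUI_split cI andbT !inE.
apply/andP; split; apply: compatible_setU => //.
- exact: subset_trans sJ1 sJ.
- by rewrite disjoint_sym (disjointWr sJ1 dbJ).
- by rewrite disjoint_sym (disjointWr sJ1 dgJ).
- rewrite connectF_sym; apply: connectF_setU_avoid; last by rewrite connectF_sym.
  move=> h; rewrite inE => /andP[hJ]; apply: touching_avoid ncF _.
  move/forallP/(_ h): nsm; rewrite hJ smootE in_setD in_setU.
  by rewrite (disjointFl dIJ hJ) (disjointFl dgJ hJ) (subsetP sJ _ hJ).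
- exact: subset_trans (subsetDl J J1) sJ.
- by rewrite disjoint_sym (disjointWr (subsetDl J J1) dbJ).
- by rewrite disjoint_sym (disjointWr (subsetDl J J1) dgJ).
apply: connectF_setU_avoid ncF => h; rewrite !inE => /andP[+ hJ].
by rewrite hJ negb_or.
Qed.

Lemma twin_split_disjoint be ga q : twin_split be ga q -> [disjoint q.2 & q.1].
Proof.
case/and3P=> _ /subsetDP[_]; rewrite -setUA disjoint_sym disjointsU => /andP[dIJ _] _.
by rewrite disjoint_sym.
Qed.

End EdgePair.

End Connectivity.

Local Open Scope ring_scope.

Lemma sum_supersets (T : finType) (M : nmodType) (D X : {set T}) (h : {set T} -> M) :
  [disjoint D & X] ->
  \sum_(F : {set T} | (D \subset F) && [disjoint F & X]) h F =
  \sum_(A : {set T} | A \subset ~: (D :|: X)) h (D :|: A).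
Proof.
move=> dDX; rewrite (reindex_onto (fun A => D :|: A) (fun F => F :\: D)) /=; last first.
  by move=> F /andP[sDF _]; rewrite -{1}(setIidPr sDF) setID.
apply: eq_bigl => A; rewrite subsetUl disjointsU dDX setDUl setDv set0U.
by rewrite setCU subsetI -!disjoints_subset (sameP eqP setDidPl) andbC.
Qed.

(* Stated in the shape of a term of Ddiff once the T's are unfolded. *)
Lemma cross_diff_factor (R : comPzRingType) (ce cf ca cb x g : R) (k1 k2 k3 k4 : nat) :
  (1 - x) * g = x ^+ (k1 + k2) - x ^+ (k3 + k4) ->
  ce * ca * x ^+ k1 * (cf * cb * x ^+ k2) - cf * (ce * ca) * x ^+ k3 * (cb * x ^+ k4) =
  ce * cf * (1 - x) * (ca * cb * g).
Proof.
move=> gE; transitivity (ce * cf * ca * cb * ((1 - x) * g)); last by ring.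
by rewrite gE !exprD; ring.
Qed.

Section GeomDiff.
Variable R : comNzRingType.

Definition geom_diff (b a : nat) : {poly R} := \sum_(i < b) 'X^i - \sum_(i < a) 'X^i.

Lemma geom_diffE b a : (1 - 'X) * geom_diff b a = 'X^a - 'X^b.
Proof.
have geomE n : (1 - 'X) * \sum_(i < n) 'X^i = 1 - 'X^n :> {poly R}.
  by rewrite -opprB mulNr -subrX1 opprB.
by rewrite mulrBr !geomE opprB addrC addrA subrK.
Qed.

Lemma geom_diff1 b a : (geom_diff b a).[1] = b%:R - a%:R.
Proof.
have sum1 n : (\sum_(i < n) 'X^i : {poly R}).[1] = n%:R.
  rewrite horner_sum (eq_bigr (fun=> 1)) => [|i _]; last by rewrite hornerXn expr1n.
  by rewrite sumr_const card_ord.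
by rewrite hornerD hornerN !sum1.
Qed.

End GeomDiff.

Section Factorization.
Variables (V : finType) (m : nat) (ends : 'I_m -> V * V) (e f : 'I_m).
Hypothesis hef : e != f.
Implicit Types A B D X : {set 'I_m}.

Definition Tterm A : {poly {mpoly int[m]}} := (xmon A)%:P * 'X^(kcomp ends A).

Lemma Tpoly_Eef D X : [disjoint D & X] -> D :|: X = [set e; f] ->
  Tpoly ends D X = \sum_(A : {set 'I_m} | A \subset Eef e f) Tterm (D :|: A).
Proof.
have EefE : ~: [set e; f] = Eef e f.
  by apply/setP => x; rewrite !inE negb_or andbT andbC.
by move=> dDX DX; rewrite /Tpoly sum_supersets // DX EefE.
Qed.

Definition Mpoly : {poly {mpoly int[m]}} :=
  \sum_(A : {set 'I_m} | A \subset Eef e f) \sum_(B : {set 'I_m} | B \subset Eef e f)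
    (xmon A * xmon B)%:P *
    geom_diff _ (kcomp ends (f |: (e |: A)) + kcomp ends B)
                (kcomp ends (e |: A) + kcomp ends (f |: B)).

Lemma notin_Eef g A : A \subset Eef e f -> (g == e) || (g == f) -> g \notin A.
Proof.
move=> sA ef; apply: contraL ef => /(subsetP sA).
by rewrite !inE negb_or andbT andbC.
Qed.

Lemma xmonU1 g A : g \notin A -> xmon (g |: A) = 'X_g * xmon A.
Proof. by move=> gA; rewrite /xmon big_setU1. Qed.

Lemma Ddiff_factor : Ddiff ends e f = ('X_e * 'X_f)%:P * (1 - 'X) * Mpoly.
Proof.
have TeE : Tpoly ends [set e] [set f] = \sum_(A : {set 'I_m} | A \subset Eef e f) Tterm (e |: A).
  by apply: Tpoly_Eef; rewrite // disjoints1 inE.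
have TfE : Tpoly ends [set f] [set e] = \sum_(A : {set 'I_m} | A \subset Eef e f) Tterm (f |: A).
  by apply: Tpoly_Eef; rewrite 1?setUC // disjoints1 inE eq_sym.
have TefE : Tpoly ends [set e; f] set0 =
    \sum_(A : {set 'I_m} | A \subset Eef e f) Tterm (f |: (e |: A)).
  rewrite Tpoly_Eef ?setU0 -?setI_eq0 ?setI0 //.
  by apply: eq_bigr => A _; rewrite -setUA setUCA.
have T0E : Tpoly ends set0 [set e; f] = \sum_(A : {set 'I_m} | A \subset Eef e f) Tterm A.
  rewrite Tpoly_Eef ?set0U -?setI_eq0 ?set0I //.
  by apply: eq_bigr => A _; rewrite set0U.
rewrite /Ddiff TeE TfE TefE T0E !big_distrlr -sumrB /Mpoly mulr_sumr.
apply: eq_bigr => A sA; rewrite -sumrB mulr_sumr; apply: eq_bigr => B sB.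
have eA : e \notin A by rewrite (notin_Eef sA) ?eqxx.
have fB : f \notin B by rewrite (notin_Eef sB) ?eqxx ?orbT.
have feA : f \notin e |: A by rewrite !inE negb_or eq_sym hef (notin_Eef sA) ?eqxx ?orbT.
rewrite /Tterm !xmonU1 // !polyCM.
exact/cross_diff_factor/geom_diffE.
Qed.

End Factorization.

Section Evaluation.
Variables (V : finType) (m : nat) (ends : 'I_m -> V * V) (e f : 'I_m).
Implicit Types A B : {set 'I_m}.

Definition paracel_sum : {mpoly int[m]} :=
  \sum_(p : {set 'I_m} * {set 'I_m} | paracel ends e f p.1 && (p.2 \subset Eef e f))
    xmon p.1 * xmon p.2.

Lemma bridging_diff_paracel (R : pzRingType) A : A \subset Eef e f ->
  (bridging ends A f)%:R - (bridging ends (e |: A) f)%:R = (paracel ends e f A)%:R :> R.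
Proof.
move=> sA; rewrite paracel_bridging //.
case: (bridging ends (e |: A) f) (@bridging_setU1 _ _ ends e A f) => [/(_ isT)->|_].
  by rewrite subrr.
by rewrite subr0 andbT.
Qed.

Lemma Mpoly_at1 : (Mpoly ends e f).[1] = paracel_sum.
Proof.
have -> : (Mpoly ends e f).[1] =
    \sum_(A : {set 'I_m} | A \subset Eef e f) \sum_(B : {set 'I_m} | B \subset Eef e f)
      xmon A * xmon B * ((bridging ends B f)%:R - (bridging ends (e |: A) f)%:R).
  rewrite horner_sum; apply: eq_bigr => A _; rewrite horner_sum; apply: eq_bigr => B _.
  rewrite hornerM hornerC geom_diff1 (kcomp_setU1 ends (e |: A) f) (kcomp_setU1 ends B f).
  rewrite -!addnA (addnC (bridging _ _ _)) !addnA natrD [X in _ - X]natrD.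
  by rewrite opprD addrACA subrr add0r.
have swap : \sum_(A : {set 'I_m} | A \subset Eef e f) \sum_(B : {set 'I_m} | B \subset Eef e f)
      xmon A * xmon B * (bridging ends B f)%:R =
    \sum_(A : {set 'I_m} | A \subset Eef e f) \sum_(B : {set 'I_m} | B \subset Eef e f)
      xmon A * xmon B * (bridging ends A f)%:R.
  by rewrite exchange_big; apply: eq_bigr => A _; apply: eq_bigr => B _; rewrite (mulrC (xmon B)).
under eq_bigr do (under eq_bigr do rewrite mulrBr; rewrite sumrB).
rewrite sumrB swap -sumrB.
under eq_bigr => A sA do
  (rewrite -sumrB; under eq_bigr do rewrite -mulrBr bridging_diff_paracel //).
rewrite /paracel_sum -(pair_big_dep _ (fun _ B => B \subset Eef e f) (fun A B => xmon A * xmon B)).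
rewrite [RHS](eq_bigl (fun A => (A \subset Eef e f) && paracel ends e f A)) ?big_mkcondr /=.
  2: by move=> A; rewrite andb_idl // => /and3P[].
apply: eq_bigr => A _; case: (paracel ends e f A); first by under eq_bigr do rewrite mulr1.
by rewrite big1 // => B _; rewrite mulr0.
Qed.

End Evaluation.

Section Monomials.
Variable m : nat.
Implicit Types A B I J K : {set 'I_m}.

Definition mnm_of_set A : 'X_{1.. m} := (\sum_(g in A) U_(g))%MM.

Lemma mnm_of_setE A i : mnm_of_set A i = (i \in A).
Proof.
rewrite mnm_sumE; have [iA|iA] := boolP (i \in A).
  rewrite (bigD1 i) //= mnm1E eqxx big1 // => g /andP[_ gi].
  by rewrite mnm1E (negbTE gi).
by rewrite big1 // => g gA; rewrite mnm1E; case: eqP gA => // ->; rewrite (negbTE iA).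
Qed.

Lemma xmonE A : xmon A = 'X_[mnm_of_set A].
Proof. by rewrite /xmon mprodXE. Qed.

Lemma mpolyX_inj : injective (@mpolyX m int).
Proof.
move=> a b /(congr1 (mcoeff a)); rewrite !mcoeffX eqxx.
by case: eqP => // _ /eqP; rewrite oner_eq0.
Qed.

Lemma mnm_of_setI_symdiff A B :
  (mnm_of_set A + mnm_of_set B =
   mnm_of_set (A :&: B) + mnm_of_set (A :&: B) + mnm_of_set ((A :\: B) :|: (B :\: A)))%MM.
Proof.
apply/mnmP => i; rewrite !mnmDE !mnm_of_setE !inE.
by case: (i \in A); case: (i \in B).
Qed.

Lemma mnm_of_set_twice_inj I J I' J' :
  [disjoint J & I] -> [disjoint J' & I'] ->
  (mnm_of_set I + mnm_of_set I + mnm_of_set J =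
   mnm_of_set I' + mnm_of_set I' + mnm_of_set J')%MM -> (I, J) = (I', J').
Proof.
move=> dJI dJI' /mnmP E.
suff memE i : (i \in I) = (i \in I') /\ (i \in J) = (i \in J').
  by congr pair; apply/setP => i; case: (memE i).
have := E i; rewrite !mnmDE !mnm_of_setE.
have := disjointFl dJI (x := i); have := disjointFl dJI' (x := i).
by case: (i \in I); case: (i \in J); case: (i \in I'); case: (i \in J') => //= ->.
Qed.

End Monomials.

Section TwinMonomials.
Variables (V : finType) (m : nat) (ends : 'I_m -> V * V) (e f : 'I_m).

Lemma Bset_sum be ga : \sum_(mo <- Bset ends e f be ga) mo =
  \sum_(q | twin_split ends e f be ga q) xmon q.1 * xmon q.1 * xmon q.2.
Proof.
pose tm (q : {set 'I_m} * {set 'I_m}) : {mpoly int[m]} :=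
  'X_[mnm_of_set q.1 + mnm_of_set q.1 + mnm_of_set q.2].
rewrite [RHS](eq_bigr tm) => [|q _]; last by rewrite !xmonE -!mpolyXD.
rewrite -big_enum /= -(big_map tm xpredT id); apply/perm_big/uniq_perm.
- exact: undup_uniq.
- rewrite map_inj_in_uniq ?enum_uniq // => -[I J] [I' J']; rewrite !mem_enum.
  move=> /twin_split_disjoint dJI /twin_split_disjoint dJI' /mpolyX_inj.
  exact: mnm_of_set_twice_inj.
move=> mo; rewrite mem_undup; apply/mapP/mapP => [[[a a'] tw ->]|[[I J] sp ->]].
  exists (a :&: a', (a :\: a') :|: (a' :\: a)); last first.
    by rewrite !xmonE -mpolyXD mnm_of_setI_symdiff.
  by rewrite mem_enum; apply: twins_split; rewrite mem_enum in tw.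
rewrite mem_enum in sp.
set J1 := touching ends (ga :|: I) (ends e).1 J.
exists (I :|: J1, I :|: (J :\: J1)); first by rewrite mem_enum; apply: split_twins.
rewrite /= !xmonE -mpolyXD mnm_of_setI_symdiff setUI_split setU_split_symdiff //.
- by apply/subsetP => x; rewrite inE => /andP[].
exact: (twin_split_disjoint sp).
Qed.

End TwinMonomials.

Section RhsReindex.
Variables (V : finType) (m : nat) (ends : 'I_m -> V * V) (e f : 'I_m).
Implicit Types A B : {set 'I_m}.

Definition smoots A := [set g | smoot ends e f A g].

Definition split_pair (p : {set 'I_m} * {set 'I_m}) :=
  (((p.2 :\: p.1) :&: smoots p.1, p.1 :\: p.2), (p.1 :&: p.2, (p.2 :\: p.1) :\: smoots p.1)).

Definition merge_quad (r : ({set 'I_m} * {set 'I_m}) * ({set 'I_m} * {set 'I_m})) :=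
  (r.1.2 :|: r.2.1, r.1.1 :|: r.2.1 :|: r.2.2).

Definition quad_ok (r : ({set 'I_m} * {set 'I_m}) * ({set 'I_m} * {set 'I_m})) :=
  [&& r.1.1 \subset Eef e f, r.1.2 \subset Eef e f & [disjoint r.1.1 & r.1.2]] &&
  twin_split ends e f r.1.1 r.1.2 r.2.

Lemma merge_split p : merge_quad (split_pair p) = p.
Proof.
case: p => A B; congr pair; apply/setP => x; rewrite !inE.
  by case: (x \in A); case: (x \in B).
by case: (x \in A); case: (x \in B); case: (smoot ends e f A x).
Qed.

Lemma split_merge r : quad_ok r -> split_pair (merge_quad r) = r.
Proof.
case: r => -[be ga] [I J] /andP[/and3P[_ _ dbg]] /and3P[/=].
rewrite inE => /and5P[_ dIb dIg _ smI] sJ nsm.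
have key x : [&& (x \in be) ==> (x \notin ga) && smoot ends e f (ga :|: I) x,
    (x \in I) ==> (x \notin be) && (x \notin ga) &
    (x \in J) ==> [&& x \notin I, x \notin be, x \notin ga & ~~ smoot ends e f (ga :|: I) x]].
  apply/and3P; split; apply/implyP => xX.
  - by rewrite (disjointFr dbg xX) (implyP (forallP smI x) xX).
  - by rewrite (disjointFr dIb xX) (disjointFr dIg xX).
  move: (subsetP sJ x xX) (implyP (forallP nsm x) xX); rewrite !inE.
  by case: (x \in I); case: (x \in be); case: (x \in ga).
rewrite /split_pair /merge_quad /=; congr (_, _); congr (_, _);
apply/setP => x; rewrite !inE; move: (key x);
by case: (x \in be); case: (x \in ga); case: (x \in I); case: (x \in J);
   case: (smoot ends e f (ga :|: I) x).
Qed.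

Lemma quad_ok_split A B :
  quad_ok (split_pair (A, B)) = paracel ends e f A && (B \subset Eef e f).
Proof.
set S := smoots A.
have sS : S \subset Eef e f.
  by apply/subsetP => g; rewrite inE smootE => /andP[/setDP[]].
have smS : [forall g in (B :\: A) :&: S, smoot ends e f A g].
  by apply/forallP => g; apply/implyP; rewrite !inE => /andP[].
have nsmS : [forall g in (B :\: A) :\: S, ~~ smoot ends e f A g].
  by apply/forallP => g; apply/implyP; rewrite !inE => /andP[].
have dS : [disjoint (B :\: A) :&: S & A :\: B].
  rewrite -setI_eq0; apply/eqP/setP => x; rewrite !inE;
  by case: (x \in A); case: (x \in B); rewrite ?andbF.
have dIS : [disjoint A :&: B & (B :\: A) :&: S].
  rewrite -setI_eq0; apply/eqP/setP => x; rewrite !inE;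
  by case: (x \in A); case: (x \in B); rewrite ?andbF.
have dID : [disjoint A :&: B & A :\: B].
  rewrite -setI_eq0; apply/eqP/setP => x; rewrite !inE;
  by case: (x \in A); case: (x \in B); rewrite ?andbF.
have dJ : [disjoint (B :\: A) :\: S & A :&: B :|: (B :\: A) :&: S :|: A :\: B].
  rewrite -setI_eq0; apply/eqP/setP => x; rewrite !inE.
  by case: (x \in A); case: (x \in B); case: (smoot ends e f A x); rewrite ?andbF.
rewrite /quad_ok /twin_split /= inE /compatible (setUC (A :\: B)) setID.
rewrite (subsetD (_ :\: S) (Eef e f)).
rewrite (subset_trans (subsetIr _ _) sS) smS nsmS dS dIS dID dJ /= !andbT.
apply/idP/idP => [/and3P[_ /andP[_ par] sJ]|/andP[par sB]].
  rewrite par; apply/subsetP => x xB; case: (boolP (x \in A)) => xA.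
    by apply: (subsetP (paracel_sub par)).
  case: (boolP (x \in S)) => xS; first exact: (subsetP sS).
  by apply: (subsetP sJ); rewrite !in_setD xS xA.
have sA := paracel_sub par.
rewrite par (subset_trans (subsetDl _ _) sA) (subset_trans (subsetIl _ _) sA) /=.
by rewrite (subset_trans (subsetDl _ _) (subset_trans (subsetDl _ _) sB)).
Qed.

Lemma rhs35_paracel_sum : rhs35 ends e f = paracel_sum ends e f.
Proof.
rewrite /rhs35; under eq_bigr do rewrite Bset_sum mulr_sumr.
rewrite pair_big_dep (reindex_onto split_pair merge_quad split_merge).
apply: eq_big => [[A B]|[A B] _]; first by rewrite merge_split eqxx andbT -quad_ok_split.
rewrite /= !xmonE -!mpolyXD; congr mpolyX; apply/mnmP => i.
rewrite !mnmDE !mnm_of_setE !inE.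
by case: (i \in A); case: (i \in B); case: (smoot ends e f A i).
Qed.

End RhsReindex.

Theorem theorem3p5 (V : finType) (m : nat) (ends : 'I_m -> V * V)
    (e f : 'I_m) (hef : e != f) :
  exists P : {poly {mpoly int[m]}},
    Ddiff ends e f = ('X_e * 'X_f)%:P * (1 - 'X) * P /\
    P.[1] = rhs35 ends e f.
Proof.
exists (Mpoly ends e f); split; first exact: Ddiff_factor.
by rewrite Mpoly_at1 rhs35_paracel_sum.
Qed.
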